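(* $M_2(3)=4$, $M_3(3)=8$, and for every integer $k\ge 4$, $$\tfrac{3}{4}\,2^k+2\le M_k(3)\le 2^k-1.$$
   Context: All graphs are finite and simple. A path $v_1,\ldots,v_r$ in a graph $G$ is degree-monotone if $\deg_G(v_1)\le\cdots\le\deg_G(v_r)$; its order is $r$. Let $mp(G)$ be the maximum order of a degree-monotone path in $G$. For a $k$-edge-coloring of $K_n$ with colors $1,\ldots,k$, let $G_j$ be the spanning subgraph consisting of the edges colored $j$ (degrees taken in $G_j$). $M_k(m)$ is the minimum integer $M$ such that for every $n\ge M$ and every $k$-edge-coloring of $K_n$ there is some $j$ with $mp(G_j)\ge m$. *)

From mathcomp Require Import all_boot.
Set Implicit Arguments. Unset Strict Implicit. Unset Printing Implicit Defensive.

(* A simple graph on a finite vertex type T is a relation e : rel T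
   (used here only for symmetric irreflexive relations). *)
Section Graphs.
Variables (T : finType) (e : rel T).

Definition deg (x : T) : nat := #|[set y | e x y]|.

Definition dm_path (s : seq T) : bool :=
  [&& uniq s, sorted e s & sorted (fun x y => deg x <= deg y) s].

Definition mp : nat :=
  \max_(r < #|T|.+1 | [exists t : r.-tuple T, dm_path t]) r.
End Graphs.

(* A k-edge-colouring of K_n: a symmetric map c on pairs of vertices
   (diagonal values irrelevant).  G_j = spanning subgraph of colour-j edges. *)
Definition colG n k (c : 'I_n -> 'I_n -> 'I_k) (j : 'I_k) : rel 'I_n :=
  fun x y => (x != y) && (c x y == j).

Definition Mk_good (k m M : nat) : Prop :=
  forall n, M <= n ->
  forall c : 'I_n -> 'I_n -> 'I_k, (forall x y, c x y = c y x) ->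
  exists j : 'I_k, m <= mp (colG c j).

Definition is_Mk (k m M : nat) : Prop :=
  Mk_good k m M /\ forall M', Mk_good k m M' -> M <= M'.

(* Suppose no colour class G_j has a degree-monotone path of
   order 3.  Order the vertices of G_j by degree, ties broken by index, and
   call x a peak of G_j if it has a lower neighbour.  No vertex has both a
   lower and a higher neighbour, so every edge of G_j joins a peak to a
   non-peak, and the signature x |-> (x is a peak of G_j)_j is injective: x and
   y are separated in colour c(x,y).  Hence n <= 2^k.  Vertices whose
   signatures differ only at j are joined in colour j, and the peak has the
   larger degree unless both have degree 1; since both sides of G_j have the
   same degree sum, these comparisons are tight.  If all 2^k signatures occur,
   every vertex has degree 1 in every colour, so n = k + 1 < 2^k.  If exactly
   one is missing (n = 2^k - 1), it is the all-ones signature; tightness then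
   determines the degrees of the orphans (signature all-ones except at j) and
   of the all-zeros vertex in terms of a tournament on the colours, and
   counting these degrees forces k <= 3.

   Joining colourings of K_a and K_b (a <> b) by a new colour
   class K_(a,b) creates no monotone path, since degrees alternate along paths
   of K_(a,b).  Starting from explicit 3-colourings of K_6 and K_7 this gives
   k-colourings of K_n for every n <= 3 * 2^(k-2) + 1. *)

From mathcomp Require Import all_boot.
From mathcomp Require Import zify.
From Stdlib Require Import Classical.
Set Implicit Arguments. Unset Strict Implicit. Unset Printing Implicit Defensive.

Lemma eq_of_leq_sum (I : finType) (P : pred I) (F G : I -> nat) :
  (forall i, P i -> F i <= G i) -> \sum_(i | P i) F i = \sum_(i | P i) G i ->
  forall i, P i -> F i = G i.
Proof.
move=> leFG eqFG i Pi.
have := leqif_sum (fun i Pi => leqif_eq (leFG i Pi)).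
by rewrite eqFG => -[_]; rewrite eqxx => /esym/forall_inP/(_ i Pi)/eqP.
Qed.

Lemma leq_sum_subpred (I : finType) (P Q : pred I) (F : I -> nat) :
  (forall i, P i -> Q i) -> \sum_(i | P i) F i <= \sum_(i | Q i) F i.
Proof. exact: (sub_le_big leqnn (fun m n => leq_addr n m)). Qed.

Lemma succ_lt_pow2 k : 2 <= k -> k.+1 < 2 ^ k.
Proof.
elim: k => // k IH; rewrite leq_eqVlt => /orP [/eqP <- //|k_gt1].
by rewrite expnS; have := IH k_gt1; lia.
Qed.

(** * Degree-monotone paths of order three *)

Section MonotonePaths.
Variables (T : finType) (e : rel T).

Definition monotone3 (x y w : T) :=
  [&& e x y, e y w, x != w & deg e x <= deg e y <= deg e w].

Lemma mp_le_card : mp e <= #|T|.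
Proof. by apply/bigmax_leqP => r _; rewrite -ltnS. Qed.

Hypothesis e_irr : irreflexive e.

Lemma edge_neq x y : e x y -> x != y.
Proof. by apply: contraTneq => ->; rewrite e_irr. Qed.

Lemma mp_lt3P : reflect (forall x y w, ~~ monotone3 x y w) (mp e < 3).
Proof.
apply: (iffP idP) => [mp_lt3 x y w|no_mono].
  apply/negP => /and4P [exy eyw nxw deg_xyw].
  have uniq_xyw : uniq [:: x; y; w].
    by rewrite /= !inE negb_or nxw (edge_neq exy) (edge_neq eyw).
  have lt3_card : 3 < #|T|.+1.
    by rewrite ltnS -[3](card_uniqP uniq_xyw) max_card.
  suff : Ordinal lt3_card <= mp e by rewrite leqNgt mp_lt3.
  apply: (@leq_bigmax_cond _ _ (fun r : 'I_#|T|.+1 => nat_of_ord r)).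
  apply/existsP; exists [tuple x; y; w]; rewrite /dm_path /=.
  by move: uniq_xyw deg_xyw; rewrite /= exy eyw => -> /andP [-> ->].
rewrite ltnS; apply/bigmax_leqP => r /existsP [[s /= /eqP <-]].
case: s => [|x [|y [|w s]]] //= /and3P [uniq_s /and3P [exy eyw _] /and3P [dxy dyw _]].
have nxw : x != w by apply: contraTneq uniq_s => ->; rewrite /= !inE eqxx orbT.
by move: (no_mono x y w); rewrite /monotone3 exy eyw nxw dxy dyw.
Qed.
End MonotonePaths.

(** * Colourings without monotone paths of order three *)

Lemma colG_irr n k (c : 'I_n -> 'I_n -> 'I_k) j : irreflexive (colG c j).
Proof. by move=> x; rewrite /colG eqxx. Qed.

Definition dm3_free k n := exists c : 'I_n -> 'I_n -> 'I_k,
  (forall x y, c x y = c y x) /\ forall j, mp (colG c j) < 3.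

Lemma dm3_free_lt_good k n M : dm3_free k n -> Mk_good k 3 M -> n < M.
Proof.
move=> [c [c_sym c_free]] good; rewrite ltnNge; apply/negP => le_Mn.
by have [j] := good n le_Mn c c_sym; rewrite leqNgt c_free.
Qed.

Lemma Mk_good_of_bound k M :
  (forall n (c : 'I_n -> 'I_n -> 'I_k), (forall x y, c x y = c y x) ->
     (forall j, mp (colG c j) < 3) -> n < M) ->
  Mk_good k 3 M.
Proof.
move=> bound n le_Mn c c_sym; apply/existsP; apply: contraLR le_Mn.
rewrite negb_exists -ltnNge => /forallP free; apply: bound c_sym _ => j.
by rewrite ltnNge free.
Qed.

(* The degree equations satisfied by the orphans and the all-zeros vertex of a
   colouring of K_(2^k - 1) without monotone paths of order 3. *)
Section TournamentCount.
Variables (k N : nat) (beats : rel 'I_k) (J : {set 'I_k}) (h : 'I_k -> nat).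
Variable g : 'I_k -> 'I_k.
Hypothesis beats_irr : irreflexive beats.
Hypothesis beats_total : forall i j, i != j -> beats i j || beats j i.
Hypothesis beats_asym : forall i j, beats i j -> ~~ beats j i.
Hypothesis sum_out : forall i, N = h i + \sum_(l | l != i) (if beats i l then h l + 1 else 1).
Hypothesis sum_J : N = \sum_l (if l \in J then h l else 1).
Hypothesis beaten_in_J : forall i j, (j \in J) && beats i j = (j == g i).

Lemma g_in_J i : g i \in J.
Proof. by have := beaten_in_J i (g i); rewrite eqxx => /andP []. Qed.

Lemma beats_g i : beats i (g i).
Proof. by have := beaten_in_J i (g i); rewrite eqxx => /andP []. Qed.

Lemma beaten_in_J_eq i j : j \in J -> beats i j -> j = g i.
Proof. by move=> jJ bij; apply/eqP; rewrite -beaten_in_J jJ. Qed.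

Lemma beats_neq i j : beats i j -> i != j.
Proof. by apply: contraTneq => ->; rewrite beats_irr. Qed.

Definition out_weight i := \sum_(l | (l \notin J) && beats i l) h l.

Lemma sum_out_J i : N = h i + k.-1 + h (g i) + out_weight i.
Proof.
rewrite (sum_out i) -!addnA; congr (_ + _).
rewrite (eq_bigr (fun l => 1 + (if beats i l then h l else 0))); last first.
  by move=> l _; case: (beats i l); rewrite ?addn1 ?addn0.
rewrite big_split /= sum1_card cardC1 card_ord; congr (_ + _).
rewrite -big_mkcondr /= (bigID (mem J)) /= (bigD1 (g i)) /=; last first.
  by rewrite g_in_J beats_g eq_sym (beats_neq (beats_g i)).
rewrite big1 ?addn0; last first.
  move=> l /andP [/andP [/andP [nli bil] lJ] nlg].
  by move: nlg; rewrite (beaten_in_J_eq lJ bil) eqxx.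
congr (_ + _); apply: eq_bigl => l.
by case bil: (beats i l); rewrite ?andbF ?andbT //= eq_sym (beats_neq bil).
Qed.

(* Each colour beats exactly one element of J, so J is a directed triangle. *)
Lemma J_triangle a b c : a \in J -> g a = b -> g b = c ->
  [/\ g c = a, J =i [:: a; b; c] & uniq [:: a; b; c]].
Proof.
move=> aJ gab gbc.
have ab : beats a b by rewrite -gab beats_g.
have bc : beats b c by rewrite -gbc beats_g.
have [bJ cJ] : b \in J /\ c \in J by rewrite -gab -gbc !g_in_J.
have nac : a != c by apply: contraTneq bc => <-; apply: beats_asym.
have ca : beats c a.
  case/orP: (beats_total nac) => // ac.
  by move: bc; rewrite (beaten_in_J_eq cJ ac) gab beats_irr.
have nab : a != b := beats_neq ab.
split; first exact/esym/beaten_in_J_eq.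
  move=> d; apply/idP/idP => [dJ|]; last by rewrite !inE => /or3P [] /eqP ->.
  rewrite !inE; apply: contraT => /norP [nda /norP [ndb ndc]].
  have da : beats d a.
    by case/orP: (beats_total nda) => // ad; move: ndb; rewrite (beaten_in_J_eq dJ ad) gab eqxx.
  have db : beats d b.
    by case/orP: (beats_total ndb) => // bd; move: ndc; rewrite (beaten_in_J_eq dJ bd) gbc eqxx.
  by move: nab; rewrite (beaten_in_J_eq aJ da) (beaten_in_J_eq bJ db) eqxx.
by rewrite /= !inE negb_or nab nac beats_neq.
Qed.

Lemma out_weight_le i : out_weight i <= \sum_(l | l \notin J) h l.
Proof. by apply: leq_sum_subpred => l /andP []. Qed.

Lemma out_weight_outside r : r \notin J ->
  h r + out_weight r <= \sum_(l | l \notin J) h l.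
Proof.
move=> rJ; rewrite [X in _ <= X](bigD1 r) //= leq_add2l.
apply: leq_sum_subpred => l /andP [-> brl].
by rewrite eq_sym beats_neq.
Qed.

(* Outside J a colour beats all of J except its own g. *)
Lemma out_weight_triangle a b c : J =i [:: a; b; c] -> uniq [:: a; b; c] ->
  out_weight a + out_weight b + out_weight c = 2 * \sum_(l | l \notin J) h l.
Proof.
move=> Jabc uniq_abc.
have out_weightE x : out_weight x = \sum_(l | l \notin J) beats x l * h l.
  by rewrite /out_weight big_mkcondr; apply: eq_bigr => l _; case: (beats x l); rewrite ?mul1n.
rewrite !out_weightE -!big_split big_distrr /=.
apply: eq_bigr => l lJ; rewrite -!mulnDl; congr (_ * _).
have beats_J x : x \in J -> beats x l = (x != g l).
  move=> xJ; have nlx : l != x by apply: contraNneq lJ => ->.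
  rewrite -beaten_in_J xJ /=.
  by case/orP: (beats_total nlx) => blx; rewrite blx ?(negbTE (beats_asym blx)).
rewrite !beats_J ?Jabc ?inE ?eqxx ?orbT //.
have := g_in_J l; rewrite Jabc !inE.
move: uniq_abc; rewrite /= !inE !negb_or => /andP [/andP [nab nac] /andP [nbc _]].
have [nba nca ncb] : [/\ b != a, c != a & c != b] by rewrite !(eq_sym _ a) (eq_sym c).
by case/or3P => /eqP ->; rewrite !eqxx ?nab ?nac ?nbc ?nba ?nca ?ncb.
Qed.

Lemma tournament_small : k <= 3.
Proof.
rewrite leqNgt; apply/negP => k_gt3.
have [a aJ] : exists a, a \in J by exists (g (Ordinal (ltnW (ltnW (ltnW k_gt3))))); apply: g_in_J.
have [b gab] : exists b, g a = b by exists (g a).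
have [c gbc] : exists c, g b = c by exists (g b).
have [gca Jabc uniq_abc] := J_triangle aJ gab gbc.
set P := \sum_(l | l \notin J) h l.
have cardJ : #|J| = 3 by rewrite (eq_card Jabc) (card_uniqP uniq_abc).
have N_J : N = h a + h b + h c + (k - 3).
  rewrite sum_J (bigID (mem J)) /=; congr (_ + _).
    under eq_bigr => l lJ do rewrite lJ.
    rewrite (eq_bigl (mem [:: a; b; c])); last by move=> l; rewrite /= Jabc.
    by rewrite -big_uniq // !big_cons big_nil /= addn0 addnA.
  under eq_bigr => l /negbTE lJ do rewrite lJ.
  rewrite (eq_bigl (mem (~: J))); last by move=> l /=; rewrite in_setC.
  by rewrite sum1_card; have := cardsC J; rewrite card_ord cardJ; lia.
have [r rJ] : exists r, r \notin J.
  apply/existsP; rewrite -negb_forall; apply: contraTN k_gt3 => /forallP allJ.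
  have : #|'I_k| <= #|J| by apply/subset_leq_card/subsetP => l _; apply: allJ.
  by rewrite card_ord cardJ -leqNgt.
(* For x in J, N_J and sum_out_J x give h (g (g x)) = 2 + out_weight x; for
   r outside J this contradicts out_weight_outside, as the out-weights of
   a, b, c add up to 2 P. *)
have := out_weight_outside rJ; have := sum_out_J r.
have := out_weight_triangle Jabc uniq_abc; rewrite -/P.
have := sum_out_J a; have := sum_out_J b; have := sum_out_J c; rewrite gab gbc gca.
have := g_in_J r; rewrite Jabc !inE => /or3P [] /eqP ->; rewrite ?gab ?gbc ?gca;
  move: N_J (out_weight_le a) (out_weight_le b) (out_weight_le c); rewrite -/P; lia.
Qed.

End TournamentCount.

Definition flip k (j : 'I_k) (v : {ffun 'I_k -> bool}) : {ffun 'I_k -> bool} :=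
  [ffun i => v i (+) (i == j)].

Lemma flipE k (j i : 'I_k) v : flip j v i = v i (+) (i == j).
Proof. by rewrite ffunE. Qed.

Lemma flipK k (j : 'I_k) : involutive (flip j).
Proof. by move=> v; apply/ffunP => i; rewrite !flipE -addbA addbb addbF. Qed.

Lemma flip_inj k (j : 'I_k) : injective (flip j).
Proof. exact: inv_inj (flipK j). Qed.

Section NoMonotoneColouring.
Variables (n k : nat) (c : 'I_n -> 'I_n -> 'I_k).
Hypothesis c_sym : forall x y, c x y = c y x.

Local Notation G j := (colG c j).
Local Notation dg j := (deg (colG c j)).
Local Notation signature := {ffun 'I_k -> bool}.

Lemma colG_sym j x y : G j x y = G j y x.
Proof. by rewrite /colG eq_sym c_sym. Qed.

Lemma colG_c x y : x != y -> G (c x y) x y.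
Proof. by rewrite /colG eqxx andbT. Qed.

Lemma deg_sum1 j x : dg j x = \sum_(y | G j x y) 1.
Proof. by rewrite /deg sum1_card cardsE. Qed.

Lemma sum_deg x : \sum_j dg j x = n.-1.
Proof.
rewrite (eq_bigr (fun j => \sum_y (G j x y : nat))); last first.
  by move=> j _; rewrite deg_sum1 big_mkcond.
rewrite exchange_big /= (eq_bigr (fun y => (y != x : nat))); last first.
  move=> y _; rewrite eq_sym; case: (eqVneq x y) => [->|nxy] /=.
    by rewrite big1 // => j; rewrite colG_irr.
  rewrite (bigD1 (c x y)) //= colG_c // big1 // => j njc.
  by rewrite /colG [_ == j]eq_sym (negbTE njc) andbF.
by rewrite -big_mkcond sum1_card cardC1 card_ord.
Qed.

Lemma edge_deg_gt0 j x y : G j x y -> 0 < dg j x.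
Proof. by move=> exy; rewrite deg_sum1 (bigD1 y). Qed.

Lemma two_nbrs_deg j x y w : G j x y -> G j x w -> y != w -> 1 < dg j x.
Proof.
move=> exy exw nyw; have <- : #|[set y; w]| = 2 by rewrite cards2 nyw.
by apply: subset_leq_card; apply/subsetP => z; rewrite !inE => /orP [] /eqP ->.
Qed.

Lemma other_nbr j x y : G j x y -> 1 < dg j x -> exists2 w, G j x w & w != y.
Proof.
move=> exy; rewrite /deg (cardsD1 y) inE exy ltnS card_gt0.
by case/set0Pn => w; rewrite !inE => /andP [nwy exw]; exists w.
Qed.

Hypothesis c_free : forall j, mp (G j) < 3.

Lemma no_monotone3 j x y w :
  G j x y -> G j y w -> x != w -> ~~ (dg j x <= dg j y <= dg j w).
Proof.
move=> exy eyw nxw; have /mp_lt3P/(_ x y w) := c_free j.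
by rewrite /monotone3 exy eyw nxw; apply; apply: colG_irr.
Qed.

Definition below j (y x : 'I_n) := (dg j y < dg j x) || (dg j y == dg j x) && (y < x).

Definition peak j x := [exists y, G j x y && below j y x].

Lemma below_total j x y : x != y -> below j x y || below j y x.
Proof.
move=> nxy; rewrite /below; case: (ltngtP (dg j x) (dg j y)) => //= _.
by case: (ltngtP x y) => // /val_inj exy; rewrite exy eqxx in nxy.
Qed.

Lemma below_asym j x y : below j x y -> ~~ below j y x.
Proof.
by rewrite /below; case: (ltngtP (dg j x) (dg j y)) => //= _ /ltnW; rewrite leqNgt.
Qed.

Lemma below_deg j x y : below j x y -> dg j x <= dg j y.
Proof. by case/orP => [/ltnW|/andP [/eqP -> _]]. Qed.

(* A peak has a lower neighbour, so all its neighbours are lower: G_j is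
   bipartite with the peaks on one side. *)
Lemma peak_edge j x y : G j x y -> peak j x != peak j y.
Proof.
wlog y_below_x : x y / below j y x.
  move=> wlog_below exy.
  case/orP: (below_total j (edge_neq (@colG_irr _ _ c j) exy)) => [x_below_y|].
    by rewrite eq_sym; apply: wlog_below x_below_y _; rewrite colG_sym.
  by move/wlog_below; apply.
move=> exy; have -> : peak j x by apply/existsP; exists y; rewrite exy y_below_x.
apply/negP => /existsP [w /andP [eyw w_below_y]].
have [ewx|nwx] := eqVneq w x.
  by move: (below_asym y_below_x); rewrite -ewx w_below_y.
rewrite colG_sym in eyw; rewrite colG_sym in exy.
by move: (no_monotone3 eyw exy nwx); rewrite (below_deg w_below_y) (below_deg y_below_x).
Qed.

Lemma peak_deg_gt0 j x : peak j x -> 0 < dg j x.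
Proof. by case/existsP => y /andP [/edge_deg_gt0]. Qed.

Lemma nonpeak_edge_deg j a b : G j a b -> ~~ peak j a ->
  (dg j a < dg j b) || (dg j a == 1) && (dg j b == 1).
Proof.
move=> eab nonpeak_a.
have a_below_b : below j a b.
  case/orP: (below_total j (edge_neq (@colG_irr _ _ c j) eab)) => // b_below_a.
  by move: nonpeak_a; have -> : peak j a by apply/existsP; exists b; rewrite eab.
have := below_deg a_below_b; rewrite leq_eqVlt => /orP [/eqP eq_ab|->] //.
have eba : G j b a by rewrite colG_sym.
rewrite eq_ab ltnn andbb /=; have := edge_deg_gt0 eba.
rewrite leq_eqVlt => /orP [/eqP <- //|/(other_nbr eba) [w ebw nwa]].
have [le_bw|lt_wb] := leqP (dg j b) (dg j w).
  have naw : a != w by rewrite eq_sym.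
  by move: (no_monotone3 eab ebw naw); rewrite eq_ab leqnn le_bw.
rewrite colG_sym in ebw.
by move: (no_monotone3 ebw eba nwa); rewrite (ltnW lt_wb) eq_ab leqnn.
Qed.

Definition peaks x : signature := [ffun j => peak j x].

Lemma peaksE x j : peaks x j = peak j x.
Proof. by rewrite ffunE. Qed.

(* x and y are separated by the colour of the edge xy. *)
Lemma peaks_inj : injective peaks.
Proof.
move=> x y eq_xy; apply/eqP; apply: contraT => nxy.
by have := peak_edge (colG_c nxy); rewrite -!peaksE eq_xy eqxx.
Qed.

Lemma card_le_pow2 : n <= 2 ^ k.
Proof. by have := leq_card _ peaks_inj; rewrite card_ffun card_bool !card_ord. Qed.

Lemma peaks_flip_edge j x y : peaks y = flip j (peaks x) -> G j x y.
Proof.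
move=> flip_xy; have nxy : x != y.
  apply/eqP => exy; move/ffunP/(_ j): flip_xy.
  by rewrite exy flipE eqxx addbT; case: (peaks y j).
rewrite /colG nxy /=; apply: contraT => ncj; have := peak_edge (colG_c nxy).
by rewrite -!peaksE flip_xy flipE (negbTE ncj) addbF eqxx.
Qed.

Lemma flip_deg j a b : peaks a = flip j (peaks b) -> peak j b ->
  (dg j a < dg j b) || (dg j a == 1) && (dg j b == 1).
Proof.
move=> flip_ab peak_b; apply: nonpeak_edge_deg.
  by rewrite colG_sym peaks_flip_edge.
by rewrite -peaksE flip_ab flipE eqxx peaksE peak_b.
Qed.

(* The value of F at the vertex with signature v, and 0 if there is none. *)
Definition at_peaks (F : 'I_n -> nat) v := \sum_x (peaks x == v) * F x.

Lemma at_peaksE F x : at_peaks F (peaks x) = F x.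
Proof.
rewrite /at_peaks (bigD1 x) //= eqxx mul1n big1 ?addn0 // => y nyx.
by rewrite (inj_eq peaks_inj) (negbTE nyx).
Qed.

Lemma at_peaks_missing F v : v \notin codom peaks -> at_peaks F v = 0.
Proof.
move=> v_missing; rewrite /at_peaks big1 // => x _.
by rewrite (_ : peaks x == v = false) //; apply: contraNF v_missing => /eqP <-; apply: codom_f.
Qed.

Lemma sum_at_peaks F (P : pred signature) :
  \sum_(v | P v) at_peaks F v = \sum_(x | P (peaks x)) F x.
Proof.
rewrite exchange_big /= [RHS]big_mkcond /=; apply: eq_bigr => x _.
rewrite big_mkcond /= (bigD1 (peaks x)) //= eqxx mul1n big1 ?addn0.
  by case: (P (peaks x)).
by move=> v nv; rewrite eq_sym (negbTE nv) if_same.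
Qed.

Lemma sum_deg_nonpeak j :
  \sum_(x | ~~ peak j x) dg j x = \sum_(x | peak j x) dg j x.
Proof.
under eq_bigr do rewrite deg_sum1; under [RHS]eq_bigr do rewrite deg_sum1.
rewrite !pair_big_dep /= (reindex_inj (can_inj (@swap_pairK _ _))) /=.
apply: eq_bigl => -[x y] /=; case exy: (G j x y); last by rewrite colG_sym exy !andbF.
rewrite colG_sym exy !andbT.
by have := peak_edge exy; case: (peak j x); case: (peak j y).
Qed.

Lemma flip_balance j :
  \sum_(w : signature | w j) at_peaks (dg j) (flip j w) =
  \sum_(w : signature | w j) at_peaks (dg j) w.
Proof.
have -> : \sum_(w : signature | w j) at_peaks (dg j) (flip j w) =
          \sum_(v : signature | ~~ v j) at_peaks (dg j) v.
  rewrite [RHS](reindex_inj (@flip_inj _ j)); apply: eq_bigl => w.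
  by rewrite flipE eqxx addbT negbK.
rewrite !sum_at_peaks; under eq_bigl do rewrite peaksE; under [RHS]eq_bigl do rewrite peaksE.
exact: sum_deg_nonpeak.
Qed.

Lemma flip_tight j :
  (forall w : signature, w j -> at_peaks (dg j) (flip j w) <= at_peaks (dg j) w) ->
  forall w : signature, w j -> at_peaks (dg j) (flip j w) = at_peaks (dg j) w.
Proof. by move=> le_flip; apply: eq_of_leq_sum le_flip (flip_balance j). Qed.

Lemma at_peaks_flip_le j (w : signature) : w j ->
  w \in codom peaks -> flip j w \in codom peaks ->
  at_peaks (dg j) (flip j w) <= at_peaks (dg j) w.
Proof.
move=> wj /codomP [b eq_w]; subst w; rewrite peaksE in wj.
move=> /codomP [a flip_ba]; rewrite flip_ba !at_peaksE.
by case/orP: (flip_deg (esym flip_ba) wj) => [/ltnW|/andP [/eqP -> /eqP ->]].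
Qed.

(* With every signature present the inequalities of flip_deg are tight, so
   every vertex has degree 1 in every colour. *)
Lemma card_lt_pow2 : 2 <= k -> n < 2 ^ k.
Proof.
move=> k_ge2; rewrite ltn_neqAle card_le_pow2 andbT; apply/eqP => n_eq.
have onto v : v \in codom peaks.
  by apply: (inj_card_onto peaks_inj); rewrite card_ffun card_bool !card_ord n_eq.
have deg1 j a b : peaks a = flip j (peaks b) -> peak j b -> dg j a = 1 /\ dg j b = 1.
  move=> flip_ab peak_b.
  have := @flip_tight j (fun w wj => at_peaks_flip_le wj (onto w) (onto _)) (peaks b).
  rewrite peaksE -flip_ab !at_peaksE => /(_ peak_b) eq_ab.
  by case/orP: (flip_deg flip_ab peak_b) => [|/andP [/eqP -> /eqP ->]] //; rewrite eq_ab ltnn.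
have n_gt0 : 0 < n by rewrite n_eq expn_gt0.
have := sum_deg (Ordinal n_gt0); set x := Ordinal n_gt0.
have -> : \sum_j dg j x = \sum_(j < k) 1.
  apply: eq_bigr => j _; have /codomP [x' /esym flip_x'x] := onto (flip j (peaks x)).
  have [peak_x|nonpeak_x] := boolP (peak j x); first exact: (deg1 _ _ _ flip_x'x peak_x).2.
  have flip_xx' : peaks x = flip j (peaks x') by rewrite flip_x'x flipK.
  apply: (deg1 _ _ _ flip_xx' _).1.
  by rewrite -peaksE flip_x'x flipE eqxx peaksE (negbTE nonpeak_x).
by rewrite sum1_card card_ord n_eq; have := succ_lt_pow2 k_ge2; lia.
Qed.

Section OneMissing.
Hypothesis k_gt2 : 2 < k.
Hypothesis n_eq : n.+1 = 2 ^ k.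
Variable x0 : 'I_n.

Definition ones : signature := [ffun=> true].
Definition zeros : signature := [ffun=> false].

Lemma missing_le1 v w : v \notin codom peaks -> w \notin codom peaks -> v = w.
Proof.
have : #|~: [set v | v \in codom peaks]| <= 1.
  have := cardsC [set v | v \in codom peaks].
  by rewrite cardsE (card_codom peaks_inj) card_ffun card_bool !card_ord -n_eq; lia.
by move/card_le1_eqP => le1 v_missing w_missing; apply: le1; rewrite !inE.
Qed.

Lemma missing_exists : exists v, v \notin codom peaks.
Proof.
apply/existsP; rewrite -negb_forall; apply/negP => /forallP all_in.
have : #|signature| <= #|codom peaks| by apply/subset_leq_card/subsetP => v _; apply: all_in.
by rewrite (card_codom peaks_inj) card_ffun card_bool !card_ord -n_eq ltnn.
Qed.

(* If the missing signature v had v_j = 0, the tight inequalities of colour j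
   would give the present vertex with signature flip j v degree 0. *)
Lemma missing_ones v : v \notin codom peaks -> v = ones.
Proof.
move=> v_missing; apply/ffunP => j; rewrite ffunE; apply: contraT => /negbTE vj.
have present w : w != v -> w \in codom peaks.
  by move=> nwv; apply: contraNT nwv => w_missing; rewrite (missing_le1 w_missing v_missing).
have flipvj : flip j v j by rewrite flipE vj eqxx.
have le_flip (w : signature) : w j -> at_peaks (dg j) (flip j w) <= at_peaks (dg j) w.
  move=> wj; have [->|nw] := eqVneq w (flip j v); first by rewrite flipK at_peaks_missing.
  apply: at_peaks_flip_le; rewrite // present //; first by apply: contraTneq wj => ->; rewrite vj.
  by apply: contra_neq nw => <-; rewrite flipK.
have := flip_tight le_flip flipvj; rewrite flipK at_peaks_missing //.
have /codomP [b eq_b] : flip j v \in codom peaks.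
  by apply: present; apply/eqP => /ffunP/(_ j); rewrite flipE vj eqxx.
rewrite eq_b at_peaksE => deg0; have := flipvj; rewrite eq_b peaksE => /peak_deg_gt0.
by rewrite -deg0.
Qed.

Lemma ones_missing : ones \notin codom peaks.
Proof. by have [v v_missing] := missing_exists; rewrite -(missing_ones v_missing). Qed.

Lemma peaks_onto w : w != ones -> w \in codom peaks.
Proof. by move=> nw; apply: contraNT nw => /missing_ones ->. Qed.

Lemma peaks_neq_ones x : peaks x != ones.
Proof. by apply: contraNneq ones_missing => <-; apply: codom_f. Qed.

Lemma flip_neq_ones j (v : signature) : v j -> flip j v != ones.
Proof. by move=> vj; apply/eqP => /ffunP/(_ j); rewrite flipE eqxx addbT vj ffunE. Qed.

Definition vertex_of w := odflt x0 [pick x | peaks x == w].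

Lemma peaks_vertex_of w : w != ones -> peaks (vertex_of w) = w.
Proof.
move=> nw; rewrite /vertex_of; case: pickP => [x /eqP //|none].
by have /codomP [x eq_w] := peaks_onto nw; move: (none x); rewrite eq_w eqxx.
Qed.

(* The partner of the vertex x in colour j has the signature of x flipped at
   j; the orphan of colour j is the vertex whose partner would be missing. *)
Definition partner j x := vertex_of (flip j (peaks x)).
Definition orphan j := vertex_of (flip j ones).

Lemma peaks_orphan j : peaks (orphan j) = flip j ones.
Proof. by apply: peaks_vertex_of; apply: flip_neq_ones; rewrite ffunE. Qed.

Lemma peaks_partner j x : x != orphan j -> peaks (partner j x) = flip j (peaks x).
Proof.
move=> nx; apply: peaks_vertex_of; apply: contra_neq nx => flip_ones.
by apply: peaks_inj; rewrite peaks_orphan -flip_ones flipK.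
Qed.

Lemma partner_edge j x : x != orphan j -> G j x (partner j x).
Proof. by move=> nx; apply: peaks_flip_edge; rewrite peaks_partner. Qed.

Lemma partner_neq_orphan j x : x != orphan j -> partner j x != orphan j.
Proof.
move=> nx; apply/eqP => eq_px; have := peaks_partner nx.
by rewrite eq_px peaks_orphan => /flip_inj eq_x; move: (peaks_neq_ones x); rewrite -eq_x eqxx.
Qed.

Lemma partnerK j x : x != orphan j -> partner j (partner j x) = x.
Proof. by move=> nx; apply: peaks_inj; rewrite !peaks_partner ?flipK ?partner_neq_orphan. Qed.

Lemma orphan_nonpeak j : ~~ peak j (orphan j).
Proof. by rewrite -peaksE peaks_orphan flipE eqxx ffunE. Qed.

Lemma peak_neq_orphan j b : peak j b -> b != orphan j.
Proof. by apply: contraTneq => ->; apply: orphan_nonpeak. Qed.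

Definition orphan_nbrs j := [set y | G j (orphan j) y].

Lemma orphan_nbr_peak j b : b \in orphan_nbrs j -> peak j b.
Proof. by rewrite inE => /peak_edge; rewrite (negbTE (orphan_nonpeak j)); case: (peak j b). Qed.

Lemma peak_deg_partner_le j b : peak j b ->
  dg j (partner j b) + (b \in orphan_nbrs j) <= dg j b.
Proof.
move=> peak_b; have nb := peak_neq_orphan peak_b.
case/orP: (flip_deg (peaks_partner nb) peak_b) => [lt_pb|/andP [/eqP deg_p /eqP deg_b]].
  by case: (b \in _); rewrite ?addn1 ?addn0 // ltnW.
case: (boolP (b \in orphan_nbrs j)) => [b_nbr|]; last by rewrite addn0 deg_p deg_b.
have b_orphan : G j b (orphan j) by rewrite colG_sym -inE.
have := two_nbrs_deg b_orphan (partner_edge nb).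
by rewrite eq_sym partner_neq_orphan // deg_b => /(_ isT).
Qed.

(* Counted over the peaks of G_j, the degree excess over the partners is
   exactly the degree of the orphan, whose partner is missing; so the
   inequalities of peak_deg_partner_le are equalities. *)
Lemma peak_deg_partner j b : peak j b ->
  dg j b = dg j (partner j b) + (b \in orphan_nbrs j).
Proof.
move=> peak_b.
pose A (w : signature) := w j && (w != ones).
pose in_nbrs x := (x \in orphan_nbrs j : nat).
have balance : \sum_(w | A w) (at_peaks (dg j) (flip j w) + at_peaks in_nbrs w) =
               \sum_(w | A w) at_peaks (dg j) w.
  have := flip_balance j; rewrite (bigD1 ones) ?ffunE //= [in RHS](bigD1 ones) ?ffunE //=.
  rewrite (at_peaks_missing _ ones_missing) -peaks_orphan at_peaksE add0n => <-.
  rewrite big_split /= addnC; congr (_ + _).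
  rewrite sum_at_peaks /deg -sum1_card big_mkcond [RHS]big_mkcond /=.
  apply: eq_bigr => x _; rewrite /A /in_nbrs peaks_neq_ones andbT peaksE -/(orphan_nbrs j).
  by case: (boolP (x \in orphan_nbrs j)) => [/orphan_nbr_peak ->|_]; rewrite ?if_same.
have le_A w : A w -> at_peaks (dg j) (flip j w) + at_peaks in_nbrs w <= at_peaks (dg j) w.
  case/andP => wj /peaks_onto/codomP [b' eq_w]; rewrite eq_w peaksE in wj *.
  by rewrite -(peaks_partner (peak_neq_orphan wj)) !at_peaksE peak_deg_partner_le.
have := eq_of_leq_sum le_A balance (i := peaks b).
rewrite /A peaksE peak_b peaks_neq_ones -(peaks_partner (peak_neq_orphan peak_b)).
by rewrite !at_peaksE => /(_ isT).
Qed.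

Lemma peak_deg1 j b : peak j b -> b \notin orphan_nbrs j -> dg j b = 1.
Proof.
move=> peak_b b_nbr; have := peak_deg_partner peak_b; rewrite (negbTE b_nbr) addn0 => eq_deg.
case/orP: (flip_deg (peaks_partner (peak_neq_orphan peak_b)) peak_b) => [|/andP [_ /eqP //]].
by rewrite eq_deg ltnn.
Qed.


Lemma orphan_nbr_nbrs_sub j b : b \in orphan_nbrs j ->
  [set y | G j b y] \subset orphan j |: partner j @: orphan_nbrs j.
Proof.
move=> b_nbr; apply/subsetP => y; rewrite !inE => eby.
have [->|ny] := eqVneq y (orphan j); rewrite ?eqxx //=.
have nonpeak_y : ~~ peak j y.
  by have := peak_edge eby; rewrite (orphan_nbr_peak b_nbr); case: (peak j y).
set b' := partner j y.
have peak_b' : peak j b'.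
  by rewrite -peaksE peaks_partner // flipE eqxx peaksE (negbTE nonpeak_y).
case: (boolP (b' \in orphan_nbrs j)) => [b'_nbr|b'_nbr].
  by apply/imsetP; exists b'; rewrite // /b' partnerK.
have deg_y : dg j y = 1.
  have := peak_deg_partner peak_b'; rewrite (negbTE b'_nbr) addn0 (peak_deg1 peak_b' b'_nbr).
  by rewrite /b' partnerK.
have nbb' : b != b' by apply: contraNneq b'_nbr => <-.
have eyb : G j y b by rewrite colG_sym.
by have := two_nbrs_deg eyb (partner_edge ny) nbb'; rewrite deg_y.
Qed.

Lemma orphan_deg_lt j b : b \in orphan_nbrs j -> dg j (orphan j) < dg j b.
Proof.
move=> b_nbr; have e_ob : G j (orphan j) b by rewrite inE in b_nbr.
case/orP: (nonpeak_edge_deg e_ob (orphan_nonpeak j)) => // /andP [_ /eqP deg_b].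
have nb := peak_neq_orphan (orphan_nbr_peak b_nbr).
have e_pb : G j (partner j b) b by rewrite colG_sym partner_edge.
have := edge_deg_gt0 e_pb.
by have := peak_deg_partner (orphan_nbr_peak b_nbr); rewrite b_nbr deg_b addn1 => -[<-].
Qed.

Lemma orphan_nbr_nbrs j b : b \in orphan_nbrs j ->
  [set y | G j b y] = orphan j |: partner j @: orphan_nbrs j.
Proof.
move=> b_nbr; apply/eqP; rewrite eqEcard orphan_nbr_nbrs_sub //=.
apply: leq_trans (orphan_deg_lt b_nbr).
by rewrite cardsU1 -add1n leq_add ?leq_b1 //; apply: leq_imset_card.
Qed.

Lemma orphan_nbr_deg j b : b \in orphan_nbrs j -> dg j b = (dg j (orphan j)).+1.
Proof.
move=> b_nbr; apply/eqP; rewrite eqn_leq (orphan_deg_lt b_nbr) andbT.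
rewrite {1}/deg (orphan_nbr_nbrs b_nbr) cardsU1 -add1n leq_add ?leq_b1 //.
exact: leq_imset_card.
Qed.

Lemma nonpeak_nbrs j a : ~~ peak j a -> 1 < dg j a -> [set y | G j a y] = orphan_nbrs j.
Proof.
move=> nonpeak_a deg_a.
have nbr_in y : G j a y -> y \in orphan_nbrs j.
  move=> eay; have peak_y : peak j y.
    by have := peak_edge eay; rewrite (negbTE nonpeak_a); case: (peak j y).
  apply: contraT => y_nbr; have deg_y := peak_deg1 peak_y y_nbr.
  case/orP: (nonpeak_edge_deg eay nonpeak_a) => [|/andP [/eqP deg_a1 _]].
    by rewrite deg_y ltnS leqNgt (ltnW deg_a).
  by rewrite deg_a1 in deg_a.
have [y0 e_ay0] : exists y0, G j a y0.
  by move: (ltnW deg_a); rewrite /deg card_gt0 => /set0Pn [y]; rewrite inE; exists y.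
have a_in : a \in orphan j |: partner j @: orphan_nbrs j.
  by rewrite -(orphan_nbr_nbrs (nbr_in _ e_ay0)) inE colG_sym.
apply/setP => y; rewrite inE; apply/idP/idP => [/nbr_in //|y_nbr].
by move: a_in; rewrite -(orphan_nbr_nbrs y_nbr) inE colG_sym.
Qed.

Lemma other_colour (i j : 'I_k) : exists l, (l != i) && (l != j).
Proof.
have /card_gt0P [l] : 0 < #|~: [set i; j]|.
  by rewrite cardsCs setCK card_ord cards2 subn_gt0 (leq_ltn_trans _ k_gt2) // ltnS leq_b1.
by rewrite !inE negb_or; exists l.
Qed.

Lemma zeros_neq_ones : zeros != ones.
Proof. by apply/eqP => /ffunP/(_ (Ordinal (ltnW (ltnW k_gt2)))); rewrite !ffunE. Qed.

Definition bottom := vertex_of zeros.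

Lemma peaks_bottom : peaks bottom = zeros.
Proof. exact: peaks_vertex_of zeros_neq_ones. Qed.

Lemma bottom_nonpeak l : ~~ peak l bottom.
Proof. by rewrite -peaksE peaks_bottom ffunE. Qed.

Lemma bottom_neq_orphan l : bottom != orphan l.
Proof.
apply/eqP => /(congr1 peaks)/ffunP; have [m /andP [nml _]] := other_colour l l.
by move/(_ m); rewrite peaks_bottom peaks_orphan flipE (negbTE nml) !ffunE.
Qed.

Definition heavy := [set l | 1 < dg l bottom].

Lemma deg_bottom l : dg l bottom = if l \in heavy then dg l (orphan l) else 1.
Proof.
rewrite inE; case: ifP => [deg_gt1|/negbT].
  by rewrite {1}/deg (nonpeak_nbrs (bottom_nonpeak l) deg_gt1).
have := edge_deg_gt0 (partner_edge (bottom_neq_orphan l)).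
by case: (dg l bottom) => [|[|]].
Qed.

Lemma orphan_neq i j : i != j -> orphan i != orphan j.
Proof.
move=> nij; apply/eqP => /(congr1 peaks)/ffunP/(_ i).
by rewrite !peaks_orphan !flipE !ffunE eqxx (negbTE nij).
Qed.

(* The orphans of i and j differ only at i and j, hence so do the colours. *)
Lemma orphans_colour i j : i != j ->
  (c (orphan i) (orphan j) == i) || (c (orphan i) (orphan j) == j).
Proof.
move=> nij; have := peak_edge (colG_c (orphan_neq nij)).
by rewrite -!peaksE !peaks_orphan !flipE !ffunE; case: (_ == i); case: (_ == j).
Qed.

Definition beats i j := (i != j) && (c (orphan i) (orphan j) == j).

Lemma beats_irr : irreflexive beats.
Proof. by move=> i; rewrite /beats eqxx. Qed.

Lemma beats_total i j : i != j -> beats i j || beats j i.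
Proof.
move=> nij; rewrite /beats nij [j == i]eq_sym nij (c_sym (orphan j)) /=.
by case/orP: (orphans_colour nij) => ->; rewrite ?orbT.
Qed.

Lemma beats_asym i j : beats i j -> ~~ beats j i.
Proof.
by case/andP => nij /eqP cj; rewrite /beats c_sym cj eq_sym (negbTE nij) andbF.
Qed.

Lemma beatsE i j : beats i j = (i != j) && (orphan i \in orphan_nbrs j).
Proof.
rewrite /beats inE /colG; case: (eqVneq i j) => //= nij.
by rewrite eq_sym orphan_neq 1?eq_sym // c_sym.
Qed.

Lemma deg_orphan i l : l != i ->
  dg l (orphan i) = if beats i l then (dg l (orphan l)).+1 else 1.
Proof.
move=> nli; have peak_i : peak l (orphan i).
  by rewrite -peaksE peaks_orphan flipE (negbTE nli) ffunE.
rewrite beatsE eq_sym nli /=; case: ifP => [|/negbT]; first exact: orphan_nbr_deg.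
exact: peak_deg1.
Qed.

Lemma sum_deg_orphan i : n.-1 =
  dg i (orphan i) + \sum_(l | l != i) (if beats i l then dg l (orphan l) + 1 else 1).
Proof.
rewrite -(sum_deg (orphan i)) (bigD1 i) //=; congr (_ + _).
by apply: eq_bigr => l nli; rewrite deg_orphan // addn1.
Qed.

Lemma sum_deg_bottom : n.-1 = \sum_l (if l \in heavy then dg l (orphan l) else 1).
Proof. by rewrite -(sum_deg bottom); apply: eq_bigr => l _; rewrite deg_bottom. Qed.

Lemma heavy_beaten j i : (i \in heavy) && beats j i = (i == c bottom (orphan j)).
Proof.
apply/idP/eqP => [/andP [heavy_i]|eq_i].
  rewrite inE in heavy_i; rewrite beatsE => /andP [_].
  by rewrite -(nonpeak_nbrs (bottom_nonpeak i) heavy_i) inE => /andP [_ /eqP].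
have e_bo : G i bottom (orphan j) by rewrite eq_i colG_c ?bottom_neq_orphan.
have heavy_i : i \in heavy.
  rewrite inE ltnNge; apply/negP => deg_le1.
  have e_bp : partner i bottom \in [set y | G i bottom y].
    by rewrite inE partner_edge ?bottom_neq_orphan.
  have e_bo' : orphan j \in [set y | G i bottom y] by rewrite inE.
  have [m /andP [nmi nmj]] := other_colour i j.
  move: (card_le1_eqP deg_le1 _ _ e_bo' e_bp) => /(congr1 peaks)/ffunP/(_ m).
  rewrite peaks_partner ?bottom_neq_orphan // peaks_bottom peaks_orphan.
  by rewrite !flipE !ffunE (negbTE nmi) (negbTE nmj).
have deg_i : 1 < dg i bottom by rewrite inE in heavy_i.
rewrite heavy_i beatsE -(nonpeak_nbrs (bottom_nonpeak i) deg_i) inE e_bo andbT /=.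
apply: contraTneq e_bo => ->; apply/negP => /peak_edge.
by rewrite (negbTE (bottom_nonpeak i)) (negbTE (orphan_nonpeak i)).
Qed.

Lemma one_missing_small : k <= 3.
Proof.
exact: (tournament_small beats_irr beats_total beats_asym
          sum_deg_orphan sum_deg_bottom heavy_beaten).
Qed.

End OneMissing.

Lemma card_neq_pred_pow2 : 3 < k -> n.+1 != 2 ^ k.
Proof.
move=> k_gt3; apply/eqP => n_eq.
have n_gt0 : 0 < n by have := succ_lt_pow2 (ltnW (ltnW k_gt3)); lia.
by have := one_missing_small (ltnW k_gt3) n_eq (Ordinal n_gt0); rewrite leqNgt k_gt3.
Qed.

End NoMonotoneColouring.

(** * Constructions *)

Lemma dm3_free_small k n : 0 < k -> n <= 2 -> dm3_free k n.
Proof.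
move=> k_gt0 n_le2; exists (fun _ _ => Ordinal k_gt0); split=> // j.
by apply: leq_ltn_trans (mp_le_card _) _; rewrite card_ord ltnS.
Qed.

Lemma deg_imset (T T' : finType) (e : rel T') (v : T') (f : T -> T') (A : {set T}) :
  injective f -> (forall z, e v z = (z \in f @: A)) -> deg e v = #|A|.
Proof.
move=> f_inj nbrs; rewrite /deg -(card_imset _ f_inj); apply: eq_card => z.
by rewrite inE nbrs.
Qed.

Section Join.
Variables (k a b : nat) (c1 : 'I_a -> 'I_a -> 'I_k) (c2 : 'I_b -> 'I_b -> 'I_k).
Hypotheses (c1_sym : forall x y, c1 x y = c1 y x) (c2_sym : forall x y, c2 x y = c2 y x).

(* The old colours are embedded as lift ord_max; the new colour ord_max is the
   complete bipartite graph between the two parts. *)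
Definition join_colour (x y : 'I_(a + b)) : 'I_k.+1 :=
  match split x, split y with
  | inl x', inl y' => lift ord_max (c1 x' y')
  | inr x', inr y' => lift ord_max (c2 x' y')
  | _, _ => ord_max
  end.

Local Notation G := (colG join_colour).

Lemma join_colour_sym x y : join_colour x y = join_colour y x.
Proof.
by rewrite /join_colour; case: (split x) => x'; case: (split y) => y'; rewrite 1?c1_sym 1?c2_sym.
Qed.

Lemma split_lshift x : split (lshift b x) = inl x :> 'I_a + 'I_b.
Proof. exact: (unsplitK (inl x)). Qed.

Lemma split_rshift y : split (rshift a y) = inr y :> 'I_a + 'I_b.
Proof. exact: (unsplitK (inr y)). Qed.

Lemma colG_join_ll j x y : G (lift ord_max j) (lshift b x) (lshift b y) = colG c1 j x y.
Proof. by rewrite /colG /join_colour !split_lshift (inj_eq (@lift_inj _ _)) eq_lshift. Qed.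

Lemma colG_join_rr j x y : G (lift ord_max j) (rshift a x) (rshift a y) = colG c2 j x y.
Proof. by rewrite /colG /join_colour !split_rshift (inj_eq (@lift_inj _ _)) eq_rshift. Qed.

Lemma colG_join_lr j x y : G (lift ord_max j) (lshift b x) (rshift a y) = false.
Proof.
by rewrite /colG /join_colour split_lshift split_rshift eq_sym (negbTE (neq_lift _ _)) andbF.
Qed.

Lemma colG_join_rl j x y : G (lift ord_max j) (rshift a x) (lshift b y) = false.
Proof.
by rewrite /colG /join_colour split_lshift split_rshift eq_sym (negbTE (neq_lift _ _)) andbF.
Qed.

Lemma colG_join_new x y : G ord_max x y = ((x < a) != (y < a)).
Proof.
rewrite /colG /join_colour.
case: split_ordP => x' -> ; case: split_ordP => y' ->;
  by rewrite ?eq_lrshift ?eq_rlshift ?eqxx ?(eq_sym _ ord_max) ?(negbTE (neq_lift _ _)) ?andbF.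
Qed.

Lemma not_lshift_rshift (A : {set 'I_a}) (y : 'I_b) : (rshift a y \in lshift b @: A) = false.
Proof. by apply/imsetP => -[x _ /eqP]; rewrite eq_rlshift. Qed.

Lemma not_rshift_lshift (A : {set 'I_b}) (x : 'I_a) : (lshift b x \in @rshift a b @: A) = false.
Proof. by apply/imsetP => -[y _ /eqP]; rewrite eq_lrshift. Qed.

Lemma deg_join_l j x : deg (G (lift ord_max j)) (lshift b x) = deg (colG c1 j) x.
Proof.
apply: (deg_imset (A := [set y | colG c1 j x y]) (@lshift_inj a b)) => z.
case: (split_ordP z) => z' ->; rewrite ?colG_join_ll ?colG_join_lr ?not_lshift_rshift //.
by rewrite (mem_imset _ _ (@lshift_inj _ _)) inE.
Qed.

Lemma deg_join_r j x : deg (G (lift ord_max j)) (rshift a x) = deg (colG c2 j) x.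
Proof.
apply: (deg_imset (A := [set y | colG c2 j x y]) (@rshift_inj a b)) => z.
case: (split_ordP z) => z' ->; rewrite ?colG_join_rr ?colG_join_rl ?not_rshift_lshift //.
by rewrite (mem_imset _ _ (@rshift_inj _ _)) inE.
Qed.

Lemma deg_join_new_l x : deg (G ord_max) (lshift b x) = b.
Proof.
transitivity #|[set: 'I_b]|; last by rewrite cardsT card_ord.
apply: (deg_imset (A := [set: 'I_b]) (@rshift_inj a b)) => z.
rewrite colG_join_new; case: (split_ordP z) => z' ->; rewrite /= ?ltn_ord ?not_rshift_lshift //=.
by rewrite imset_f ?inE.
Qed.

Lemma deg_join_new_r y : deg (G ord_max) (rshift a y) = a.
Proof.
transitivity #|[set: 'I_a]|; last by rewrite cardsT card_ord.
apply: (deg_imset (A := [set: 'I_a]) (@lshift_inj a b)) => z.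
rewrite colG_join_new; case: (split_ordP z) => z' ->; rewrite /= ?ltn_ord ?not_lshift_rshift //=.
  by rewrite ltnNge leq_addr imset_f ?inE.
by rewrite ltnNge leq_addr.
Qed.

Hypotheses (c1_free : forall j, mp (colG c1 j) < 3) (c2_free : forall j, mp (colG c2 j) < 3).
Hypothesis neq_ab : a != b.

(* In K_{a,b} the degrees along a path alternate between b and a <> b. *)
Lemma join_free j : mp (G j) < 3.
Proof.
apply/mp_lt3P; first exact: colG_irr.
move=> x y w; rewrite /monotone3; case: (unliftP ord_max j) => [j' ->|->].
  case: (split_ordP x) => x' ->; case: (split_ordP y) => y' ->;
    rewrite ?colG_join_lr ?colG_join_rl //;
    case: (split_ordP w) => w' ->; rewrite ?colG_join_lr ?colG_join_rl ?andbF //.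
    rewrite !colG_join_ll !deg_join_l eq_lshift.
    by have /mp_lt3P := c1_free j'; apply; apply: colG_irr.
  rewrite !colG_join_rr !deg_join_r eq_rshift.
  by have /mp_lt3P := c2_free j'; apply; apply: colG_irr.
have ltn_rshift (y' : 'I_b) : (a + y' < a) = false by rewrite ltnNge leq_addr.
case: (split_ordP x) => x' ->; case: (split_ordP y) => y' ->; case: (split_ordP w) => w' ->;
  rewrite !colG_join_new /= ?deg_join_new_l ?deg_join_new_r ?ltn_ord ?ltn_rshift //=;
  by rewrite -eqn_leq ?(eq_sym b) (negbTE neq_ab) andbF.
Qed.

End Join.

Lemma dm3_free_join k a b : dm3_free k a -> dm3_free k b -> a != b -> dm3_free k.+1 (a + b).
Proof.
move=> [c1 [c1_sym c1_free]] [c2 [c2_sym c2_free]] neq_ab.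
exists (join_colour c1 c2); split; first exact: join_colour_sym.
by move=> j; apply: join_free.
Qed.

Section Tables.
Variables (t : seq (seq nat)) (n : nat).

Definition table_colour (x y : nat) := nth 0 (nth [::] t x) y.
Definition table_edge (j x y : nat) := (x != y) && (table_colour x y == j).
Definition table_deg j x := count (table_edge j x) (iota 0 n).

Definition table_ok :=
  all (fun x => all (fun y =>
    (table_colour x y == table_colour y x) && (table_colour x y < 3)) (iota 0 n)) (iota 0 n) &&
  all (fun j => all (fun x => all (fun y => all (fun w =>
    ~~ [&& table_edge j x y, table_edge j y w, x != w &
           table_deg j x <= table_deg j y <= table_deg j w])
    (iota 0 n)) (iota 0 n)) (iota 0 n)) (iota 0 3).

Definition table_colouring (x y : 'I_n) : 'I_3 := inord (table_colour x y).

Lemma deg_count (T : finType) (e : rel T) x : deg e x = count (e x) (enum T).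
Proof. by rewrite /deg cardsE cardE enumT /enum_mem size_filter. Qed.

Lemma table_dm3_free : table_ok -> dm3_free 3 n.
Proof.
case/andP => /allP ok_sym /allP ok_free.
have in_iota (x : 'I_n) : (x : nat) \in iota 0 n by rewrite mem_iota ltn_ord.
have ok_xy (x y : 'I_n) : (table_colour x y == table_colour y x) && (table_colour x y < 3).
  exact: (allP (ok_sym _ (in_iota x)) _ (in_iota y)).
have val_colouring (x y : 'I_n) : table_colouring x y = table_colour x y :> nat.
  by rewrite inordK //; case/andP: (ok_xy x y).
have colGE (j : 'I_3) (x y : 'I_n) : colG table_colouring j x y = table_edge j x y.
  by rewrite /colG /table_edge -[table_colouring x y == j]val_eqE /= val_colouring.
have degE (j : 'I_3) (x : 'I_n) : deg (colG table_colouring j) x = table_deg j x.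
  by rewrite deg_count /table_deg -val_enum_ord count_map; apply: eq_count => y; rewrite /= colGE.
exists table_colouring; split.
  by move=> x y; apply/val_inj; rewrite /= !val_colouring; case/andP: (ok_xy x y) => /eqP.
move=> j; apply/mp_lt3P; first exact: colG_irr.
move=> x y w; rewrite /monotone3 !colGE !degE.
have j_in : (j : nat) \in iota 0 3 by rewrite mem_iota ltn_ord.
have /allP/(_ x (in_iota x))/allP/(_ y (in_iota y))/allP/(_ w (in_iota w)) := ok_free j j_in.
by [].
Qed.
End Tables.

Definition colouring6 : seq (seq nat) :=
  [:: [:: 0;1;1;0;1;2]; [:: 1;0;2;1;0;2]; [:: 1;2;0;2;2;0];
      [:: 0;1;2;0;1;1]; [:: 1;0;2;1;0;2]; [:: 2;2;0;1;2;0]].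

Definition colouring7 : seq (seq nat) :=
  [:: [:: 0;0;2;2;0;1;1]; [:: 0;0;2;2;1;0;0]; [:: 2;2;0;0;2;1;1]; [:: 2;2;0;0;2;1;1];
      [:: 0;1;2;2;0;0;0]; [:: 1;0;1;1;0;0;2]; [:: 1;0;1;1;0;2;0]].

Lemma dm3_free_3_6 : dm3_free 3 6.
Proof. by apply: (@table_dm3_free colouring6); vm_compute. Qed.

Lemma dm3_free_3_7 : dm3_free 3 7.
Proof. by apply: (@table_dm3_free colouring7); vm_compute. Qed.

Lemma dm3_free_2 n : n <= 3 -> dm3_free 2 n.
Proof.
move=> n_le3; have [n_le2|n_gt2] := leqP n 2; first exact: dm3_free_small.
have -> : n = 1 + 2 by lia.
by apply: dm3_free_join => //; apply: dm3_free_small.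
Qed.

Lemma dm3_free_3 n : n <= 7 -> dm3_free 3 n.
Proof.
move=> n_le7; have [n_le2|n_gt2] := leqP n 2; first exact: dm3_free_small.
case: (ltngtP n 6) => [n_lt6|n_gt6|->]; last exact: dm3_free_3_6.
  have [->|n_neq5] := eqVneq n 5.
    by rewrite (_ : 5 = 2 + 3) //; apply: dm3_free_join => //; apply: dm3_free_2.
  have -> : n = 1 + (n - 1) by lia.
  by apply: dm3_free_join; [apply: dm3_free_2..|]; lia.
have -> : n = 7 by lia.
exact: dm3_free_3_7.
Qed.

Lemma dm3_free_large k n : 3 <= k -> n <= 3 * 2 ^ (k - 2) + 1 -> dm3_free k n.
Proof.
elim: k n => // k IH n; rewrite ltnS leq_eqVlt => /orP [/eqP <- /dm3_free_3 //|k_ge3].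
rewrite subSn ?(leq_trans _ k_ge3) // expnS; set N := 3 * 2 ^ (k - 2) + 1 => n_le.
have [n_leN|n_gtN] := leqP n N.
  have [->|n_gt0] := posnP n; first exact: dm3_free_small.
  rewrite -(addn0 n); apply: dm3_free_join; [exact: IH| |by rewrite -lt0n].
  by apply: dm3_free_small; rewrite // (leq_trans _ k_ge3).
have -> : n = N + (n - N) by lia.
by apply: dm3_free_join; [exact: IH|apply: IH|]; lia.
Qed.

Lemma Mk_good_pow2 k : 2 <= k -> Mk_good k 3 (2 ^ k).
Proof. by move=> k_ge2; apply: Mk_good_of_bound => n c c_sym c_free; apply: card_lt_pow2. Qed.

Lemma Mk_good_pow2_pred k : 3 < k -> Mk_good k 3 (2 ^ k).-1.
Proof.
move=> k_gt3; apply: Mk_good_of_bound => n c c_sym c_free.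
have := card_lt_pow2 c_sym c_free (ltnW (ltnW k_gt3)).
by have := card_neq_pred_pow2 c_sym c_free k_gt3; lia.
Qed.

Lemma ex_minimum (P : nat -> Prop) N : P N -> exists M, P M /\ forall M', P M' -> M <= M'.
Proof.
elim/ltn_ind: N => N IH PN.
have [[M' [PM' lt_M'N]]|no_less] := classic (exists M', P M' /\ M' < N); first exact: IH PM'.
exists N; split=> // M' PM'; rewrite leqNgt; apply/negP => lt_M'N.
by apply: no_less; exists M'.
Qed.

Theorem theorem1p3 :
  is_Mk 2 3 4 /\ is_Mk 3 3 8 /\
  (forall k, 4 <= k ->
     exists M, is_Mk k 3 M /\ 3 * 2 ^ k + 8 <= 4 * M /\ M <= 2 ^ k - 1).
Proof.
split.
  split; first exact: Mk_good_pow2.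
  by move=> M' /(dm3_free_lt_good (dm3_free_2 (leqnn 3))).
split.
  split; first exact: Mk_good_pow2.
  by move=> M' /(dm3_free_lt_good (dm3_free_3 (leqnn 7))).
move=> k k_ge4; have good_pred := Mk_good_pow2_pred k_ge4.
have [M [good_M min_M]] := ex_minimum good_pred.
exists M; split; first by [].
have := min_M _ good_pred; have := dm3_free_lt_good (dm3_free_large (ltnW k_ge4) (leqnn _)) good_M.
have -> : 2 ^ k = 4 * 2 ^ (k - 2) by rewrite -[4]/(2 ^ 2) -expnD subnKC // (leq_trans _ k_ge4).
lia.
Qed.
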